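(* Let $n>2k\ge2$ be integers and let $J(n,k)$ be the Johnson graph with vertex set $V$ the $k$-subsets of $[n]$, two vertices adjacent iff their intersection has size $k-1$; let $A$ be its adjacency matrix, with distinct eigenvalues $\phi_0>\dots>\phi_k$ and corresponding orthogonal eigenprojections $P_0,\dots,P_k$. Let $w_1\neq w_2$ be two vertices, $\gamma>0$, and $H=-\gamma A-|w_1\rangle\langle w_1|-|w_2\rangle\langle w_2|$ on $\mathcal{H}=\mathbb{C}^V$. Let $\mathcal{H}_{\mathrm{inv}}$ be the subspace of vectors $f\in\mathcal{H}$ such that $f(v)=f(v')$ whenever $|v\cap w_1\cap w_2|=|v'\cap w_1\cap w_2|$ and the multisets $\{|v\cap w_1|,|v\cap w_2|\}$ and $\{|v'\cap w_1|,|v'\cap w_2|\}$ coincide. Let $\lambda$ be an eigenvalue of $H$ having an eigenvector in $\mathcal{H}_{\mathrm{inv}}$, and suppose $\lambda\notin\sigma(-\gamma A)$. Define $$m_i=1+\sum_{\ell=0}^k\frac{\|P_\ell|w_i\rangle\|^2}{\lambda+\gamma\phi_\ell}\ (i=1,2),\qquad m_3=\sum_{\ell=0}^k\frac{\langle w_1|P_\ell|w_2\rangle}{\lambda+\gamma\phi_\ell}.$$ Then $m_1+m_3=m_2+m_3=0$.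
   Context: $\{|v\rangle : v\in V\}$ is the computational basis; $\sigma(U)$ denotes the spectrum of $U$. *)

From HB Require Import structures.
From mathcomp Require Import all_boot all_order all_algebra.
Set Implicit Arguments. Unset Strict Implicit. Unset Printing Implicit Defensive.
Import Order.TTheory GRing.Theory Num.Theory.
Local Open Scope ring_scope.

Definition jvert (n k : nat) := {S : {set 'I_n} | #|S| == k}.

(* Number of vertices; C^V is represented as column vectors 'cV_(jN n k),
   coordinates indexed through enum_val / enum_rank. *)
Definition jN (n k : nat) : nat := #|{: jvert n k}|.

Section Johnson.
Variables (C : numClosedFieldType) (n k : nat).

Definition jv (i : 'I_(jN n k)) : {set 'I_n} := val (enum_val i).

Definition johnson_adj : 'M[C]_(jN n k) :=
  \matrix_(i, j) ((#|jv i :&: jv j| == k.-1)%N)%:R.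

Definition ket (w : jvert n k) : 'cV[C]_(jN n k) :=
  \col_i (i == enum_rank w)%:R.
Definition bra (w : jvert n k) : 'rV[C]_(jN n k) :=
  \row_i (i == enum_rank w)%:R.

Definition hamiltonian (gamma : C) (w1 w2 : jvert n k) : 'M[C]_(jN n k) :=
  - (gamma *: johnson_adj) - ket w1 *m bra w1 - ket w2 *m bra w2.

Definition inv_equiv (w1 w2 : jvert n k) (i j : 'I_(jN n k)) : bool :=
  let a := val w1 in let b := val w2 in
  [&& (#|jv i :&: a :&: b| == #|jv j :&: a :&: b|)%N &
      [|| ((#|jv i :&: a| == #|jv j :&: a|) && (#|jv i :&: b| == #|jv j :&: b|))%N
        | ((#|jv i :&: a| == #|jv j :&: b|) && (#|jv i :&: b| == #|jv j :&: a|))%N]].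

Definition in_Hinv (w1 w2 : jvert n k) (f : 'cV[C]_(jN n k)) : Prop :=
  forall i j, inv_equiv w1 w2 i j -> f i 0 = f j 0.

Definition adjmx (M : 'M[C]_(jN n k)) : 'M[C]_(jN n k) := map_mx Num.conj M^T.

Definition spectral_decomposition (A : 'M[C]_(jN n k))
  (phi : 'I_k.+1 -> C) (P : 'I_k.+1 -> 'M[C]_(jN n k)) : Prop :=
  [/\ forall l, phi l \is Num.real,
      forall l m : 'I_k.+1, (l < m)%N -> phi m < phi l,
      forall l, P l != 0
    & forall l, adjmx (P l) = P l] /\
  [/\ forall l m, P l *m P m = (if l == m then P l else 0),
      \sum_l P l = 1%:M
    & A = \sum_l phi l *: P l].

End Johnson.

From HB Require Import structures.
From mathcomp Require Import all_boot all_order all_algebra.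
Set Implicit Arguments.
Unset Strict Implicit.
Unset Printing Implicit Defensive.
Import Order.TTheory GRing.Theory Num.Theory.
Local Open Scope ring_scope.

(* Since lambda is not in the spectrum of -gamma A, the matrix
   M = lambda + gamma A is invertible, with inverse the resolvent
   R = sum_l (lambda + gamma phi_l)^-1 P_l, whose entries R_{w_i w_j} are
   m_i - 1 and m_3.  An eigenvector f of H satisfies M f = -f(w1)|w1> - f(w2)|w2>,
   and invariance under the swap of w1 and w2 forces f(w1) = f(w2) =: a, so
   f = -a R(|w1> + |w2>), with a <> 0 because f <> 0.  Reading this identity
   at w1 and at w2 and using the symmetry of R gives m1 + m3 = m2 + m3 = 0. *)

Section SpectralCalculus.

Variables (F : fieldType) (N K : nat) (P : 'I_K -> 'M[F]_N).
Hypothesis P_orth : forall l m, P l *m P m = (if l == m then P l else 0).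

Lemma proj_mulmx_spectral (a : 'I_K -> F) l :
  P l *m (\sum_m a m *: P m) = a l *: P l.
Proof.
rewrite mulmx_sumr (bigD1 l) //= -scalemxAr P_orth eqxx.
rewrite big1 ?addr0 // => m /negbTE neq_ml.
by rewrite -scalemxAr P_orth eq_sym neq_ml scaler0.
Qed.

Lemma mulmx_spectral (a b : 'I_K -> F) :
  (\sum_l a l *: P l) *m (\sum_l b l *: P l) = \sum_l (a l * b l) *: P l.
Proof.
rewrite mulmx_suml; apply: eq_bigr => l _.
by rewrite -scalemxAl proj_mulmx_spectral scalerA.
Qed.

Lemma mulmx_spectral_inv (d : 'I_K -> F) :
  \sum_l P l = 1%:M -> (forall l, d l != 0) ->
  (\sum_l (d l)^-1 *: P l) *m (\sum_l d l *: P l) = 1%:M.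
Proof.
move=> P_sum d_nz; rewrite mulmx_spectral -P_sum.
by apply: eq_bigr => l _; rewrite mulVf ?scale1r.
Qed.

Lemma eigenvalue_spectral (a : 'I_K -> F) l :
  P l != 0 -> eigenvalue (\sum_m a m *: P m) (a l).
Proof.
apply: contraNneq => eigenspace0; rewrite -submx0 -eigenspace0.
by apply/eigenspaceP; rewrite proj_mulmx_spectral.
Qed.

Lemma eigenvalue_spectral_scaleN (c : F) (a : 'I_K -> F) l :
  P l != 0 -> eigenvalue (- (c *: \sum_m a m *: P m)) (- (c * a l)).
Proof.
move=> P_nz; rewrite scaler_sumr -sumrN.
under eq_bigr do rewrite scalerA -scaleNr.
exact: eigenvalue_spectral.
Qed.

End SpectralCalculus.

Lemma trmx_inv_sym (R : comUnitRingType) N (M Q : 'M[R]_N) :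
  M^T = M -> Q *m M = 1%:M -> Q^T = Q.
Proof.
move=> M_sym QM; have MQ := mulmx1C QM.
have QtM : Q^T *m M = 1%:M by rewrite -{1}M_sym -trmx_mul MQ trmx1.
by rewrite -[Q^T]mulmx1 -MQ mulmxA QtM mul1mx.
Qed.

Lemma hermitian_proj_col_norm (C : numClosedFieldType) N (P : 'M[C]_N) r :
  map_mx Num.conj P^T = P -> P *m P = P ->
  \sum_j `|(P *m delta_mx r (0 : 'I_1)) j 0| ^+ 2 = P r r.
Proof.
move=> P_herm P_idem; rewrite -[in RHS]P_idem mxE.
apply: eq_bigr => j _; rewrite -colE normCK !mxE mulrC; congr (_ * _).
by rewrite -{2}P_herm !mxE.
Qed.

Lemma resolvent_two_point (F : fieldType) N (M R : 'M[F]_N) (f : 'cV_N)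
    (i1 i2 : 'I_N) :
  R *m M = 1%:M -> f != 0 -> f i1 0 = f i2 0 ->
  M *m f = - (f i1 0 *: delta_mx i1 0 + f i2 0 *: delta_mx i2 0) ->
  1 + R i1 i1 + R i1 i2 = 0 /\ 1 + R i2 i1 + R i2 i2 = 0.
Proof.
move=> RM f_nz f12 Mf; rewrite -f12 in Mf; set a := f i1 0 in f12 Mf *.
have f_res : f = - (a *: (R *m (delta_mx i1 0 + delta_mx i2 0))).
  by rewrite -[f]mul1mx -RM -mulmxA Mf -scalerDr mulmxN scalemxAr.
have a_nz : a != 0 by apply: contraNneq f_nz => a0; rewrite f_res a0 scale0r oppr0.
have f_entry i : a * (1 + R i i1 + R i i2) = a - f i 0.
  by rewrite f_res mulmxDr -!colE !mxE opprK -addrA mulrDr mulr1.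
by split; apply: (mulfI a_nz); rewrite mulr0 f_entry; apply/eqP;
  rewrite subr_eq0 -?f12.
Qed.

Section JohnsonHamiltonian.

Variables (C : numClosedFieldType) (n k : nat).

Lemma ket_delta (w : jvert n k) : ket C w = delta_mx (enum_rank w) 0.
Proof. by apply/matrixP => i j; rewrite !mxE ord1 eqxx andbT. Qed.

Lemma bra_delta (w : jvert n k) : bra C w = delta_mx 0 (enum_rank w).
Proof. by apply/matrixP => i j; rewrite !mxE ord1 eqxx. Qed.

Lemma bra_mulmx (w : jvert n k) (f : 'cV[C]_(jN n k)) :
  bra C w *m f = (f (enum_rank w) 0)%:M.
Proof.
apply/matrixP => i j; rewrite ord1 [j]ord1 bra_delta -rowE !mxE.
by rewrite eqxx mulr1n.
Qed.

Lemma trmx_johnson_adj : (johnson_adj C n k)^T = johnson_adj C n k.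
Proof. by apply/matrixP => i j; rewrite !mxE setIC. Qed.

Lemma inv_equiv_swap (w1 w2 : jvert n k) :
  inv_equiv w1 w2 (enum_rank w1) (enum_rank w2).
Proof.
rewrite /inv_equiv /jv !enum_rankK !setIid (setIC (val w2)) -setIA setIid eqxx.
by rewrite (eqP (valP w1)) (eqP (valP w2)) setIC eqxx orbT.
Qed.

Lemma hamiltonian_eigenvectorE gamma (w1 w2 : jvert n k) lambda f :
  hamiltonian gamma w1 w2 *m f = lambda *: f ->
  (lambda%:M + gamma *: johnson_adj C n k) *m f =
    - (f (enum_rank w1) 0 *: ket C w1 + f (enum_rank w2) 0 *: ket C w2).
Proof.
rewrite /hamiltonian !mulmxBl -!mulmxA !bra_mulmx !mul_mx_scalar => Hf.
rewrite mulmxDl mul_scalar_mx -Hf mulNmx -scalemxAl.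
by rewrite addrC !addrA subrr add0r opprD.
Qed.

End JohnsonHamiltonian.

Theorem corollary2 (C : numClosedFieldType) (n k : nat)
  (hk : (2 <= 2 * k)%N) (hn : (2 * k < n)%N)
  (phi : 'I_k.+1 -> C) (P : 'I_k.+1 -> 'M[C]_(jN n k))
  (hspec : spectral_decomposition (johnson_adj C n k) phi P)
  (w1 w2 : jvert n k) (hw : w1 != w2)
  (gamma : C) (hgamma : 0 < gamma)
  (lambda : C)
  (heig : exists f : 'cV[C]_(jN n k),
      [/\ f != 0, in_Hinv w1 w2 f & hamiltonian gamma w1 w2 *m f = lambda *: f])
  (hnspec : ~~ eigenvalue (- (gamma *: johnson_adj C n k)) lambda) :
  let m1 := 1 + \sum_l (\sum_j `|(P l *m ket C w1) j 0| ^+ 2) / (lambda + gamma * phi l) in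
  let m2 := 1 + \sum_l (\sum_j `|(P l *m ket C w2) j 0| ^+ 2) / (lambda + gamma * phi l) in
  let m3 := \sum_l (bra C w1 *m P l *m ket C w2) 0 0 / (lambda + gamma * phi l) in
  m1 + m3 = 0 /\ m2 + m3 = 0.
Proof.
move=> m1 m2 m3.
case: hspec => [[_ _ P_nz P_herm] [P_orth P_sum A_spec]].
set A := johnson_adj C n k in A_spec hnspec *.
pose d l := lambda + gamma * phi l.
have d_nz l : d l != 0.
  apply: contraNneq hnspec => /eqP; rewrite addr_eq0 => /eqP ->.
  by rewrite A_spec eigenvalue_spectral_scaleN.
have M_spec : lambda%:M + gamma *: A = \sum_l d l *: P l.
  rewrite A_spec -scalemx1 -P_sum !scaler_sumr -big_split /=.
  by apply: eq_bigr => l _; rewrite scalerA -scalerDl.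
pose R := \sum_l (d l)^-1 *: P l.
have RM : R *m (lambda%:M + gamma *: A) = 1%:M by rewrite M_spec mulmx_spectral_inv.
have R_sym : R^T = R.
  by apply: trmx_inv_sym RM; rewrite linearD /= linearZ /= tr_scalar_mx trmx_johnson_adj.
have R_entry i j : R i j = \sum_l P l i j / d l.
  by rewrite summxE; apply: eq_bigr => l _; rewrite mxE mulrC.
case: heig => f [f_nz f_inv f_eig].
move/hamiltonian_eigenvectorE: f_eig; rewrite !ket_delta => Mf.
have [e1 e2] := resolvent_two_point RM f_nz (f_inv _ _ (inv_equiv_swap w1 w2)) Mf.
have proj_norm w l :
    \sum_j `|(P l *m ket C w) j 0| ^+ 2 = P l (enum_rank w) (enum_rank w).
  have P_idem : P l *m P l = P l by rewrite P_orth eqxx.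
  by rewrite ket_delta (hermitian_proj_col_norm _ (P_herm l) P_idem).
have -> : m1 = 1 + R (enum_rank w1) (enum_rank w1).
  by rewrite R_entry; congr (_ + _); apply: eq_bigr => l _; rewrite proj_norm.
have -> : m2 = 1 + R (enum_rank w2) (enum_rank w2).
  by rewrite R_entry; congr (_ + _); apply: eq_bigr => l _; rewrite proj_norm.
have -> : m3 = R (enum_rank w1) (enum_rank w2).
  by rewrite R_entry; apply: eq_bigr => l _; rewrite bra_delta ket_delta -rowE -colE !mxE.
have R_swap : R (enum_rank w2) (enum_rank w1) = R (enum_rank w1) (enum_rank w2).
  by rewrite -[in LHS]R_sym mxE.
by split; last rewrite R_swap addrAC in e2.
Qed.
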